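(* For every $x^*\in J^*$, $$\|x^*\|_*=\sup\{x^*(x):\ x\in J\text{ has NPR hereditarily and }\|x\|_2=1\}.$$
   Context: For a real sequence $x=(x(n))_{n\in\mathbb N}$ let $\|x\|_J=\sup\bigl(\sum_{i=1}^n|\sum_{k\in I_i}x(k)|^2\bigr)^{1/2}$ over all $n$ and all families of pairwise disjoint intervals $I_1,\dots,I_n$ of $\mathbb N$ (intervals: nonempty sets of consecutive positive integers, possibly infinite). $J=\{x:\|x\|_J<\infty\}$; $J^*$ is its dual with norm $\|\cdot\|_*$; $\|\cdot\|_2$ is the $\ell_2$ norm; for $x\in J$ the series $\sum_{n\in I}x(n)$ converge for every interval $I$. For $A\subset\mathbb N$, $x|_A$ equals $x$ on $A$ and $0$ off $A$. A vector $x\in J$ has non-positive remainder (NPR) if $|\sum_n x(n)|^2\le\sum_n|x(n)|^2$; it has NPR hereditarily if $x|_I$ has NPR for every interval $I$ of $\mathbb N$. *)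

From Stdlib Require Import Reals Lra List.
From Coquelicot Require Import Coquelicot.
Open Scope R_scope.

(* Sequences x : nat -> R; index n : nat stands for the positive integer n+1. *)

(* An interval of N: [lo, b] (finite, lo <= b) or [lo, oo) (infinite). *)
Record interval := Ival { ilo : nat; ihi : option nat }.

Definition valid_interval (I : interval) : Prop :=
  match ihi I with Some b => (ilo I <= b)%nat | None => True end.

Definition in_interval (I : interval) (k : nat) : Prop :=
  (ilo I <= k)%nat /\ match ihi I with Some b => (k <= b)%nat | None => True end.

Definition disjoint_intervals (I1 I2 : interval) : Prop :=
  forall k, ~ (in_interval I1 k /\ in_interval I2 k).

Definition isum (x : nat -> R) (I : interval) : R :=
  match ihi I with
  | Some b => sum_f_R0 (fun k => x (ilo I + k)%nat) (b - ilo I)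
  | None => Series (fun k => x (ilo I + k)%nat)
  end.

Definition admissible_family (l : list interval) : Prop :=
  List.Forall valid_interval l /\ List.ForallOrdPairs disjoint_intervals l.

Definition sq_sum (x : nat -> R) (l : list interval) : R :=
  fold_right (fun I acc => (Rabs (isum x I))^2 + acc) 0 l.

Definition in_J (x : nat -> R) : Prop :=
  (forall a : nat, ex_series (fun k => x (a + k)%nat)) /\
  exists M : R, forall l, admissible_family l -> sq_sum x l <= M.

(* ||x||_J (meaningful for x in J) *)
Definition Jnorm (x : nat -> R) : R :=
  sqrt (real (Lub_Rbar (fun r => exists l, admissible_family l /\ r = sq_sum x l))).

Definition l2norm (x : nat -> R) : R := sqrt (Series (fun n => (Rabs (x n))^2)).

Definition in_Jdual (f : (nat -> R) -> R) : Prop :=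
  (forall x y, in_J x -> in_J y -> f (fun n => x n + y n) = f x + f y) /\
  (forall c x, in_J x -> f (fun n => c * x n) = c * f x) /\
  exists C : R, forall x, in_J x -> Rabs (f x) <= C * Jnorm x.

Definition Jdualnorm (f : (nat -> R) -> R) : Rbar :=
  Lub_Rbar (fun r => exists x, in_J x /\ Jnorm x <= 1 /\ r = Rabs (f x)).

Definition in_intervalb (I : interval) (k : nat) : bool :=
  (Nat.leb (ilo I) k) && match ihi I with Some b => Nat.leb k b | None => true end.

Definition restrict (x : nat -> R) (I : interval) : nat -> R :=
  fun n => if in_intervalb I n then x n else 0.

Definition NPR (x : nat -> R) : Prop :=
  (Rabs (Series x))^2 <= Series (fun n => (Rabs (x n))^2).

Definition NPR_hereditary (x : nat -> R) : Prop :=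
  forall I : interval, valid_interval I -> NPR (restrict x I).

(* An NPR-hereditary vector [y] with [||y||_2 = 1] lies in the unit ball of [J]: applying NPR
   on each interval of a disjoint family bounds the squared interval sums by the l2 masses
   of [y] on these intervals, which add up to at most 1.

   Conversely let [||z||_J <= 1].  The tails of [z] are small in [J], so [f z] is almost
   [f] of the first [N] coordinates, a linear function [h] of the partial sums
   [s 0 = 0, s 1, ..., s N] of [z].  The constraint on [z] says that along every chain
   [0 = i_0 < ... < i_r = N] the squared increments of [s] add up to at most 1.  Shifting
   one value [s k] at a time, in the direction that does not decrease [h], until some
   chain through [k] becomes tight (sum exactly 1), we reach a configuration in which every
   [k] lies on a tight chain.  An exchange inequality for maximal chain sums then shows
   that the chain of all unit steps is tight, i.e. the increments [y] of [s] satisfy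
   [||y||_2 = 1], and comparing it with the chains that jump from [A] to [E] gives
   [|y_A + ... + y_(E-1)|^2 <= |y_A|^2 + ... + |y_(E-1)|^2]: [y] is NPR-hereditary and
   [f y >= h s]. *)

From Stdlib Require Import Reals Lra Lia List Classical FunctionalExtensionality.
From Coquelicot Require Import Coquelicot.
Import ListNotations.
Open Scope R_scope.

Fixpoint psum (x : nat -> R) (m : nat) : R :=
  match m with O => 0 | S m' => psum x m' + x m' end.

Lemma sum_f_R0_psum (x : nat -> R) (n : nat) : sum_f_R0 x n = psum x (S n).
Proof. induction n as [|n IH]; simpl in *; [lra|]. rewrite IH; simpl; lra. Qed.

Lemma is_series_psum (x : nat -> R) (l : R) : is_series x l <-> is_lim_seq (psum x) l.
Proof.
  change (is_lim_seq (sum_n x) l <-> is_lim_seq (psum x) l).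
  rewrite (is_lim_seq_incr_1 (psum x)).
  split; apply is_lim_seq_ext; intro n; rewrite sum_n_Reals, sum_f_R0_psum; reflexivity.
Qed.

Lemma psum_ext (x y : nat -> R) (m : nat) :
  (forall n, (n < m)%nat -> x n = y n) -> psum x m = psum y m.
Proof.
  induction m as [|m IH]; intro H; simpl; [reflexivity|].
  rewrite IH by (intros; apply H; lia). rewrite H by lia. reflexivity.
Qed.

Lemma psum_plus (x y : nat -> R) (m : nat) :
  psum (fun n => x n + y n) m = psum x m + psum y m.
Proof. induction m; simpl; lra. Qed.

Lemma psum_scal (c : R) (x : nat -> R) (m : nat) :
  psum (fun n => c * x n) m = c * psum x m.
Proof. induction m; simpl; lra. Qed.

Section FiniteSupport.
Variables (x : nat -> R) (N : nat).
Hypothesis supp : forall n, (N <= n)%nat -> x n = 0.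

Lemma psum_stable (m : nat) : (N <= m)%nat -> psum x m = psum x N.
Proof. induction 1 as [|m Hm IH]; simpl; [reflexivity|]. rewrite supp by lia. lra. Qed.

Lemma psum_min_support (m : nat) : psum x m = psum x (Nat.min m N).
Proof.
  destruct (Nat.le_ge_cases m N).
  - rewrite Nat.min_l; auto.
  - rewrite Nat.min_r by auto. apply psum_stable; auto.
Qed.

Lemma is_series_finite_support : is_series x (psum x N).
Proof.
  apply is_series_psum, is_lim_seq_ext_loc with (u := fun _ => psum x N).
  - exists N. intros n Hn. symmetry. apply psum_stable, Hn.
  - apply is_lim_seq_const.
Qed.

Lemma Series_finite_support : Series x = psum x N.
Proof. apply is_series_unique, is_series_finite_support. Qed.

Lemma ex_series_finite_support : ex_series x.
Proof. eexists; apply is_series_finite_support. Qed.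

End FiniteSupport.

Lemma psum_shift (x : nat -> R) (lo m : nat) :
  psum (fun k => x (lo + k)%nat) m = psum x (lo + m) - psum x lo.
Proof.
  induction m as [|m IH]; simpl; [rewrite Nat.add_0_r; lra|].
  rewrite IH, Nat.add_succ_r; simpl; lra.
Qed.

Lemma isum_finite (x : nat -> R) (lo b : nat) :
  (lo <= b)%nat -> isum x (Ival lo (Some b)) = psum x (S b) - psum x lo.
Proof.
  intro H. unfold isum; simpl. rewrite sum_f_R0_psum, psum_shift.
  replace (lo + S (b - lo))%nat with (S b) by lia. reflexivity.
Qed.

Lemma isum_infinite (x : nat -> R) (lo : nat) :
  ex_series x -> isum x (Ival lo None) = Series x - psum x lo.
Proof.
  intro Hx. apply is_series_unique, is_series_psum.
  apply is_lim_seq_ext with (u := fun m => psum x (m + lo) - psum x lo).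
  { intro m. rewrite psum_shift, Nat.add_comm. reflexivity. }
  apply is_lim_seq_minus'; [|apply is_lim_seq_const].
  apply is_lim_seq_incr_n, is_series_psum, Series_correct, Hx.
Qed.

Definition icut (I : interval) (m : nat) : nat :=
  Nat.max (ilo I) (match ihi I with Some b => Nat.min m (S b) | None => m end).

Lemma psum_restrict (x : nat -> R) (I : interval) (m : nat) :
  psum (restrict x I) m = psum x (icut I m) - psum x (ilo I).
Proof.
  induction m as [|m IH].
  - replace (icut I 0) with (ilo I) by (unfold icut; destruct (ihi I); lia). simpl; lra.
  - simpl. rewrite IH. unfold restrict, in_intervalb, icut.
    destruct I as [lo [b|]]; cbn [ilo ihi andb]; destruct (Nat.leb_spec lo m) as [Hlo|Hlo].
    + destruct (Nat.leb_spec m b); cbn [andb].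
      * replace (Nat.max lo (Nat.min (S m) (S b))) with (S m) by lia.
        replace (Nat.max lo (Nat.min m (S b))) with m by lia. simpl; lra.
      * replace (Nat.max lo (Nat.min (S m) (S b))) with (Nat.max lo (Nat.min m (S b))) by lia. lra.
    + replace (Nat.max lo (Nat.min (S m) (S b))) with (Nat.max lo (Nat.min m (S b))) by lia.
      cbn [andb]; lra.
    + replace (Nat.max lo (S m)) with (S m) by lia.
      replace (Nat.max lo m) with m by lia. simpl; lra.
    + replace (Nat.max lo (S m)) with (Nat.max lo m) by lia. simpl; lra.
Qed.

Lemma is_series_restrict (x : nat -> R) (I : interval) :
  valid_interval I -> ex_series x -> is_series (restrict x I) (isum x I).
Proof.
  intros HI Hx. apply is_series_psum.
  destruct I as [lo [b|]]; unfold valid_interval in HI; simpl in HI.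
  - rewrite isum_finite by exact HI.
    apply is_lim_seq_ext_loc with (u := fun _ => psum x (S b) - psum x lo);
      [|apply is_lim_seq_const].
    exists (S b). intros m Hm. rewrite psum_restrict.
    replace (icut (Ival lo (Some b)) m) with (S b) by (unfold icut; simpl; lia). reflexivity.
  - rewrite isum_infinite by exact Hx.
    apply is_lim_seq_ext_loc with (u := fun m => psum x m - psum x lo).
    + exists lo. intros m Hm. rewrite psum_restrict.
      replace (icut (Ival lo None) m) with m by (unfold icut; simpl; lia). reflexivity.
    + apply is_lim_seq_minus'; [|apply is_lim_seq_const].
      apply is_series_psum, Series_correct, Hx.
Qed.

Lemma isum_restrict (x : nat -> R) (I : interval) :
  valid_interval I -> ex_series x -> isum x I = Series (restrict x I).
Proof. intros HI Hx. symmetry. apply is_series_unique, is_series_restrict; auto. Qed.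

Lemma Series_restrict_finite_support (x : nat -> R) (N : nat) (I : interval) :
  (forall n, (N <= n)%nat -> x n = 0) ->
  Series (restrict x I) = psum x (Nat.min (icut I N) N) - psum x (Nat.min (ilo I) N).
Proof.
  intro supp. rewrite (Series_finite_support _ N), psum_restrict.
  - rewrite <- !(psum_min_support x N supp). reflexivity.
  - intros n Hn. unfold restrict. destruct (in_intervalb I n); auto.
Qed.

Lemma in_intervalb_spec (I : interval) (k : nat) : in_intervalb I k = true <-> in_interval I k.
Proof.
  destruct I as [lo [b|]]; unfold in_intervalb, in_interval; simpl;
    rewrite Bool.andb_true_iff, !Nat.leb_le; tauto.
Qed.

Lemma isum_plus (x y : nat -> R) (I : interval) :
  (forall a, ex_series (fun k => x (a + k)%nat)) -> (forall a, ex_series (fun k => y (a + k)%nat)) ->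
  isum (fun n => x n + y n) I = isum x I + isum y I.
Proof.
  intros Hx Hy. destruct I as [lo [b|]]; unfold isum; simpl.
  - apply sum_plus.
  - apply Series_plus; auto.
Qed.

Lemma isum_scal (c : R) (x : nat -> R) (I : interval) :
  isum (fun n => c * x n) I = c * isum x I.
Proof.
  destruct I as [lo [b|]]; unfold isum; simpl.
  - rewrite scal_sum. apply sum_eq. intros; lra.
  - apply Series_scal_l.
Qed.

Lemma sq_sum_cons (x : nat -> R) (I : interval) (F : list interval) :
  sq_sum x (I :: F) = Rabs (isum x I) ^ 2 + sq_sum x F.
Proof. reflexivity. Qed.

Lemma sq_sum_nonneg (x : nat -> R) (F : list interval) : 0 <= sq_sum x F.
Proof.
  induction F as [|I F IH]; [unfold sq_sum; simpl; lra|]. rewrite sq_sum_cons. pose proof (pow2_ge_0 (Rabs (isum x I))); lra. Qed.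

Lemma sq_sum_app (x : nat -> R) (F G : list interval) :
  sq_sum x (F ++ G) = sq_sum x F + sq_sum x G.
Proof.
  induction F as [|I F IH]; cbn [app]; [change (sq_sum x []) with 0; lra|].
  rewrite !sq_sum_cons, IH. lra.
Qed.

Lemma sq_sum_scal (c : R) (x : nat -> R) (F : list interval) :
  sq_sum (fun n => c * x n) F = c ^ 2 * sq_sum x F.
Proof.
  induction F as [|I F IH]; [unfold sq_sum; simpl; lra|].
  rewrite !sq_sum_cons, isum_scal, IH, !pow2_abs. lra.
Qed.

Lemma sq_sum_plus_le (x y : nat -> R) (F : list interval) :
  (forall a, ex_series (fun k => x (a + k)%nat)) -> (forall a, ex_series (fun k => y (a + k)%nat)) ->
  sq_sum (fun n => x n + y n) F <= 2 * sq_sum x F + 2 * sq_sum y F.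
Proof.
  intros Hx Hy. induction F as [|I F IH]; [unfold sq_sum; simpl; lra|]. rewrite !sq_sum_cons.
  rewrite isum_plus, !pow2_abs by auto.
  pose proof (pow2_ge_0 (isum x I - isum y I)). nra.
Qed.

Lemma in_J_plus (x y : nat -> R) : in_J x -> in_J y -> in_J (fun n => x n + y n).
Proof.
  intros [Hx [Mx HMx]] [Hy [My HMy]]. split.
  - intro a. apply (ex_series_plus (fun k => x (a + k)%nat) (fun k => y (a + k)%nat)); auto.
  - exists (2 * Mx + 2 * My). intros F HF.
    pose proof (sq_sum_plus_le x y F Hx Hy). pose proof (HMx F HF). pose proof (HMy F HF). lra.
Qed.

Lemma in_J_scal (c : R) (x : nat -> R) : in_J x -> in_J (fun n => c * x n).
Proof.
  intros [Hx [M HM]]. split.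
  - intro a. apply (ex_series_scal_l c (fun k => x (a + k)%nat)); auto.
  - exists (c ^ 2 * M). intros F HF. rewrite sq_sum_scal.
    apply Rmult_le_compat_l; [apply pow2_ge_0 | auto].
Qed.

Lemma ex_series_of_in_J (x : nat -> R) : in_J x -> ex_series x.
Proof. intros [Hx _]. exact (Hx 0%nat). Qed.

Lemma admissible_nil : admissible_family [].
Proof. split; constructor. Qed.

Lemma Jnorm_le_sqrt (x : nat -> R) (B : R) :
  (forall F, admissible_family F -> sq_sum x F <= B) -> Jnorm x <= sqrt B.
Proof.
  intro HB. apply sqrt_le_1_alt.
  set (E := fun r => exists F, admissible_family F /\ r = sq_sum x F).
  destruct (Lub_Rbar_correct E) as [Hub Hlub].
  assert (H0 : Rbar_le 0 (Lub_Rbar E)) by (apply Hub; exists []; split; [apply admissible_nil | reflexivity]).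
  assert (HB' : Rbar_le (Lub_Rbar E) B) by (apply Hlub; intros r [F [HF ->]]; apply HB, HF).
  destruct (Lub_Rbar E); simpl in *; tauto || lra.
Qed.

Lemma sq_sum_le_Jnorm_sq (x : nat -> R) (F : list interval) :
  in_J x -> admissible_family F -> sq_sum x F <= Jnorm x ^ 2.
Proof.
  intros [_ [M HM]] HF. unfold Jnorm.
  set (E := fun r => exists F, admissible_family F /\ r = sq_sum x F).
  destruct (Lub_Rbar_correct E) as [Hub Hlub].
  assert (H1 : Rbar_le (sq_sum x F) (Lub_Rbar E)) by (apply Hub; exists F; auto).
  assert (H2 : Rbar_le (Lub_Rbar E) M) by (apply Hlub; intros r [G [HG ->]]; apply HM, HG).
  destruct (Lub_Rbar E) as [l| |]; cbn [real Rbar_le] in *; try tauto.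
  pose proof (sq_sum_nonneg x F). rewrite pow2_sqrt by lra. exact H1.
Qed.

Definition restrict_sum (a : nat -> R) (F : list interval) (n : nat) : R :=
  fold_right (fun I acc => restrict a I n + acc) 0 F.

Lemma restrict_sum_outside (a : nat -> R) (F : list interval) (n : nat) :
  List.Forall (fun I => ~ in_interval I n) F -> restrict_sum a F n = 0.
Proof.
  induction 1 as [|I F HI _ IH]; [reflexivity|].
  change (restrict a I n + restrict_sum a F n = 0). rewrite IH. unfold restrict.
  destruct (in_intervalb I n) eqn:E; [apply in_intervalb_spec in E; contradiction | ring].
Qed.

Lemma restrict_sum_bounds (a : nat -> R) (F : list interval) (n : nat) :
  (forall n, 0 <= a n) -> ForallOrdPairs disjoint_intervals F -> 0 <= restrict_sum a F n <= a n.
Proof.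
  intros Ha HF. pose proof (Ha n). induction HF as [|I F HI _ IH]; [simpl; lra|].
  change (0 <= restrict a I n + restrict_sum a F n <= a n). unfold restrict.
  destruct (in_intervalb I n) eqn:E; cbv beta iota; [|lra].
  apply in_intervalb_spec in E.
  rewrite restrict_sum_outside; [lra|].
  eapply List.Forall_impl; [|exact HI]. intros J HJ HnJ. exact (HJ n (conj E HnJ)).
Qed.

Lemma is_series_restrict_sum (a : nat -> R) (F : list interval) :
  (forall n, 0 <= a n) -> ex_series a ->
  is_series (restrict_sum a F) (fold_right (fun I acc => Series (restrict a I) + acc) 0 F).
Proof.
  intros Ha Hs. induction F as [|I F IH]; simpl.
  - apply (is_series_finite_support (fun _ => 0) 0); reflexivity.
  - apply (is_series_plus (restrict a I) (restrict_sum a F)); [|exact IH].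
    apply Series_correct, (ex_series_le (restrict a I) a); [|exact Hs].
    intro n. unfold norm; simpl; unfold abs; simpl. unfold restrict.
    destruct (in_intervalb I n); rewrite ?Rabs_R0, ?Rabs_pos_eq; auto; lra.
Qed.

Lemma sq_sum_le_l2_of_NPR_hereditary (y : nat -> R) (F : list interval) :
  ex_series y -> ex_series (fun n => Rabs (y n) ^ 2) -> NPR_hereditary y ->
  admissible_family F -> sq_sum y F <= Series (fun n => Rabs (y n) ^ 2).
Proof.
  intros Hy Hy2 HN [HV HD]. set (a := fun n => Rabs (y n) ^ 2).
  assert (Ha : forall n, 0 <= a n) by (intro; apply pow2_ge_0).
  apply Rle_trans with (fold_right (fun I acc => Series (restrict a I) + acc) 0 F).
  - clear HD. induction HV as [|I F HI _ IH]; [unfold sq_sum; simpl; lra|].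
    rewrite sq_sum_cons. simpl fold_right. apply Rplus_le_compat; [|exact IH].
    rewrite isum_restrict by auto. eapply Rle_trans; [apply (HN I HI)|].
    right. apply Series_ext. intro n. unfold a, restrict.
    destruct (in_intervalb I n); [reflexivity|]. rewrite Rabs_R0. ring.
  - rewrite <- (is_series_unique _ _ (is_series_restrict_sum a F Ha Hy2)).
    apply Series_le; [|exact Hy2]. intro n. apply restrict_sum_bounds; auto.
Qed.

Lemma Jnorm_le_l2norm_of_NPR_hereditary (y : nat -> R) :
  ex_series y -> ex_series (fun n => Rabs (y n) ^ 2) -> NPR_hereditary y -> Jnorm y <= l2norm y.
Proof. intros Hy Hy2 HN. apply Jnorm_le_sqrt. intros F HF. apply sq_sum_le_l2_of_NPR_hereditary; auto. Qed.

(* A divergent series of nonnegative terms has [Series] equal to the junk value 0,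
   so [l2norm y = 1] forces square-summability. *)
Lemma l2norm_eq_1 (y : nat -> R) :
  l2norm y = 1 -> ex_series (fun n => Rabs (y n) ^ 2) /\ Series (fun n => Rabs (y n) ^ 2) = 1.
Proof.
  unfold l2norm. set (a := fun n => Rabs (y n) ^ 2). intro Hl.
  assert (HS : Series a = 1).
  { destruct (Rle_or_lt (Series a) 0) as [H|H].
    - rewrite sqrt_neg_0 in Hl by exact H. lra.
    - rewrite <- (sqrt_sqrt (Series a)) by lra. rewrite Hl. ring. }
  split; [|exact HS].
  assert (Hex : ex_lim_seq (sum_n a)).
  { apply ex_lim_seq_incr. intro n. rewrite !sum_n_Reals.
    change (sum_f_R0 a (S n)) with (sum_f_R0 a n + a (S n)).
    assert (0 <= a (S n)) by apply pow2_ge_0. lra. }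
  unfold Series in HS. pose proof (Lim_seq_correct _ Hex) as Hl'.
  destruct (Lim_seq (sum_n a)) as [l| |]; simpl in HS; try lra.
  exists l. exact Hl'.
Qed.

Definition unit_vec (i : nat) : nat -> R := fun n => if (n =? i)%nat then 1 else 0.

Lemma psum_unit_vec (i m : nat) : psum (unit_vec i) m = if (i <? m)%nat then 1 else 0.
Proof.
  induction m as [|m IH]; simpl; [destruct i; reflexivity|]. rewrite IH. unfold unit_vec.
  destruct (Nat.ltb_spec i m), (Nat.eqb_spec m i), (Nat.ltb_spec i (S m)); lia || lra.
Qed.

Lemma unit_vec_support (i n : nat) : (S i <= n)%nat -> unit_vec i n = 0.
Proof. intro H. unfold unit_vec. destruct (Nat.eqb_spec n i); [lia | reflexivity]. Qed.

Lemma Series_unit_vec (i : nat) : Series (unit_vec i) = 1.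
Proof.
  rewrite (Series_finite_support _ (S i)) by apply unit_vec_support.
  rewrite psum_unit_vec. destruct (Nat.ltb_spec i (S i)); lia || reflexivity.
Qed.

Lemma Rabs_unit_vec_sq (i n : nat) : Rabs (unit_vec i n) ^ 2 = unit_vec i n.
Proof. unfold unit_vec. destruct (n =? i)%nat; rewrite ?Rabs_R1, ?Rabs_R0; ring. Qed.

Lemma NPR_hereditary_unit_vec (i : nat) : NPR_hereditary (unit_vec i).
Proof.
  intros I _. unfold NPR.
  assert (E : forall n, restrict (unit_vec i) I n = if in_intervalb I i then unit_vec i n else 0).
  { intro n. unfold restrict, unit_vec.
    destruct (Nat.eqb_spec n i) as [->|]; [reflexivity|].
    destruct (in_intervalb I n), (in_intervalb I i); reflexivity. }
  rewrite (Series_ext _ _ E), (Series_ext (fun n => Rabs (restrict (unit_vec i) I n) ^ 2)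
    (fun n => if in_intervalb I i then unit_vec i n else 0))
    by (intro n; rewrite E; destruct (in_intervalb I i); [apply Rabs_unit_vec_sq | rewrite Rabs_R0; ring]).
  destruct (in_intervalb I i).
  - rewrite Series_unit_vec, Rabs_R1. lra.
  - rewrite (Series_finite_support _ 0) by reflexivity. simpl. rewrite Rabs_R0. lra.
Qed.

Lemma in_J_unit_vec (i : nat) : in_J (unit_vec i).
Proof.
  assert (Hsupp : forall a, ex_series (fun k => unit_vec i (a + k)%nat)).
  { intro a. apply ex_series_finite_support with (S i). intros n Hn. apply unit_vec_support. lia. }
  split; [exact Hsupp|]. exists 1. intros F HF.
  rewrite <- (Series_unit_vec i), <- (Series_ext _ _ (Rabs_unit_vec_sq i)).
  apply sq_sum_le_l2_of_NPR_hereditary; auto using NPR_hereditary_unit_vec.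
  - exact (Hsupp 0%nat).
  - apply (ex_series_ext (unit_vec i)); [intro n; symmetry; apply Rabs_unit_vec_sq|exact (Hsupp 0%nat)].
Qed.

Definition head_part (N : nat) (z : nat -> R) : nat -> R := fun n => if (n <? N)%nat then z n else 0.

Definition tail_part (N : nat) (z : nat -> R) : nat -> R := restrict z (Ival N None).

Lemma head_part_add_tail_part (N : nat) (z : nat -> R) :
  z = fun n => head_part N z n + tail_part N z n.
Proof.
  apply functional_extensionality; intro n.
  unfold head_part, tail_part, restrict, in_intervalb; simpl.
  destruct (Nat.ltb_spec n N), (Nat.leb_spec N n); simpl; lia || lra.
Qed.

Lemma head_part_S (N : nat) (z : nat -> R) :
  head_part (S N) z = fun n => head_part N z n + z N * unit_vec N n.
Proof.
  apply functional_extensionality; intro n. unfold head_part, unit_vec.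
  destruct (Nat.ltb_spec n (S N)), (Nat.ltb_spec n N), (Nat.eqb_spec n N); subst; lia || lra.
Qed.

Lemma head_part_0 (z : nat -> R) : head_part 0 z = fun n => 0 * unit_vec 0 n.
Proof. apply functional_extensionality; intro n. unfold head_part. simpl. ring. Qed.

Lemma in_J_head_part (N : nat) (z : nat -> R) : in_J (head_part N z).
Proof.
  induction N as [|N IH].
  - rewrite head_part_0. apply in_J_scal, in_J_unit_vec.
  - rewrite head_part_S. apply in_J_plus; [exact IH|]. apply in_J_scal, in_J_unit_vec.
Qed.

Lemma in_J_tail_part (N : nat) (z : nat -> R) : in_J z -> in_J (tail_part N z).
Proof.
  intro Hz. replace (tail_part N z) with (fun n => z n + -1 * head_part N z n).
  - apply in_J_plus; [exact Hz|]. apply in_J_scal, in_J_head_part.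
  - apply functional_extensionality; intro n.
    pose proof (f_equal (fun g => g n) (head_part_add_tail_part N z)) as E. simpl in E. lra.
Qed.

Lemma dual_head_part (f : (nat -> R) -> R) (N : nat) (z : nat -> R) :
  in_Jdual f -> f (head_part N z) = psum (fun i => f (unit_vec i) * z i) N.
Proof.
  intros [Hadd [Hscal _]]. induction N as [|N IH].
  - rewrite head_part_0, Hscal by apply in_J_unit_vec. simpl. ring.
  - rewrite head_part_S, Hadd, Hscal, IH 
      by first [apply in_J_head_part | apply in_J_scal, in_J_unit_vec | apply in_J_unit_vec].
    simpl. ring.
Qed.

Lemma isum_tail_part_finite (N : nat) (z : nat -> R) (lo b : nat) :
  (lo <= b)%nat ->
  isum (tail_part N z) (Ival lo (Some b)) = psum z (Nat.max N (S b)) - psum z (Nat.max N lo).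
Proof. intro H. unfold tail_part. rewrite isum_finite, !psum_restrict by exact H.
  unfold icut; simpl. lra. Qed.

Lemma isum_tail_part_infinite (N : nat) (z : nat -> R) (lo : nat) :
  ex_series z -> isum (tail_part N z) (Ival lo None) = Series z - psum z (Nat.max N lo).
Proof.
  intro Hz. unfold tail_part.
  rewrite isum_infinite by (eexists; apply is_series_restrict; [exact I | exact Hz]).
  rewrite <- isum_restrict, isum_infinite, psum_restrict by easy. unfold icut; simpl. lra.
Qed.

Definition clip (N B : nat) (I : interval) : list interval :=
  match ihi I with
  | Some b => if (b <? N)%nat then [] else [Ival (Nat.max (ilo I) N) (Some b)]
  | None => [Ival (Nat.max (ilo I) N) (Some B)]
  end.

Lemma is_lim_seq_sq_sum_clip (z : nat -> R) (N : nat) (I : interval) :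
  ex_series z -> valid_interval I ->
  is_lim_seq (fun B => sq_sum z (clip N B I)) (Rabs (isum (tail_part N z) I) ^ 2).
Proof.
  intros Hz HI. destruct I as [lo [b|]]; unfold valid_interval in HI; simpl in HI;
    unfold clip; cbn [ilo ihi].
  - rewrite isum_tail_part_finite by exact HI. destruct (Nat.ltb_spec b N).
    + replace (Nat.max N (S b)) with N by lia. replace (Nat.max N lo) with N by lia.
      rewrite Rminus_diag, Rabs_R0, pow_i by lia. exact (is_lim_seq_const 0).
    + rewrite sq_sum_cons, isum_finite by lia.
      replace (Nat.max N (S b)) with (S b) by lia. rewrite Nat.max_comm.
      unfold sq_sum at 1; simpl fold_right. rewrite Rplus_0_r. apply is_lim_seq_const.
  - rewrite isum_tail_part_infinite, pow2_abs by exact Hz.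
    set (c := psum z (Nat.max N lo)).
    apply is_lim_seq_ext_loc with (u := fun B => (psum z (S B) - c) * (psum z (S B) - c)).
    + exists (Nat.max N lo). intros B HB.
      rewrite sq_sum_cons, isum_finite, pow2_abs, Nat.max_comm by lia.
      unfold c, sq_sum; simpl. ring.
    + replace ((Series z - c) ^ 2) with ((Series z - c) * (Series z - c)) by ring.
      assert (Hl : is_lim_seq (fun B => psum z (S B) - c) (Series z - c)).
      { apply is_lim_seq_minus'; [|apply is_lim_seq_const].
        apply (is_lim_seq_incr_1 (psum z)), is_series_psum, Series_correct, Hz. }
      apply is_lim_seq_mult'; exact Hl.
Qed.

Lemma is_lim_seq_sq_sum_clip_family (z : nat -> R) (N : nat) (F : list interval) :
  ex_series z -> List.Forall valid_interval F ->
  is_lim_seq (fun B => sq_sum z (flat_map (clip N B) F)) (sq_sum (tail_part N z) F).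
Proof.
  intros Hz HV. induction HV as [|I F HI _ IH]; [exact (is_lim_seq_const 0)|].
  simpl flat_map. rewrite sq_sum_cons.
  apply is_lim_seq_ext with (u := fun B => sq_sum z (clip N B I) + sq_sum z (flat_map (clip N B) F)).
  - intro B. symmetry. apply sq_sum_app.
  - apply is_lim_seq_plus'; [apply is_lim_seq_sq_sum_clip|]; assumption.
Qed.

Definition below (B : nat) (I : interval) : Prop :=
  (ilo I <= B)%nat /\ forall b, ihi I = Some b -> (b <= B)%nat.

Lemma below_mono (B B' : nat) (I : interval) : (B <= B')%nat -> below B I -> below B' I.
Proof. intros H [H1 H2]. split; [lia|]. intros b Hb. specialize (H2 b Hb). lia. Qed.

Lemma exists_below (F : list interval) : exists B, List.Forall (below B) F.
Proof.
  induction F as [|[lo hi] F [B HB]]; [exists 0%nat; constructor|].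
  exists (Nat.max B (Nat.max lo (match hi with Some b => b | None => 0 end))). constructor.
  - split; simpl; [lia|]. intros b ->. lia.
  - eapply List.Forall_impl; [|exact HB]. intro; apply below_mono. lia.
Qed.

Definition in_window (N B : nat) (I : interval) : Prop :=
  (N <= ilo I)%nat /\ exists c, ihi I = Some c /\ (c < B)%nat.

Lemma in_window_mono (N N' B B' : nat) (I : interval) :
  (N' <= N)%nat -> (B <= B')%nat -> in_window N B I -> in_window N' B' I.
Proof. intros HN HB [H1 [c [Hc H2]]]. split; [lia|]. exists c. split; [exact Hc | lia]. Qed.

Lemma clip_subset (N B : nat) (I J : interval) (k : nat) :
  In J (clip N B I) -> in_interval J k -> in_interval I k.
Proof.
  destruct I as [lo [b|]]; unfold clip, in_interval; simpl.
  - destruct (b <? N)%nat; simpl; [tauto|]. intros [<-|[]]; simpl; lia.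
  - intros [<-|[]]; simpl. lia.
Qed.

Lemma clip_in_window (N B : nat) (I J : interval) :
  valid_interval I -> below B I -> (N <= B)%nat -> In J (clip N B I) ->
  valid_interval J /\ in_window N (S B) J.
Proof.
  destruct I as [lo [b|]]; unfold clip, valid_interval, below, in_window; simpl; intros HI [H1 H2] HN.
  - specialize (H2 b eq_refl). destruct (Nat.ltb_spec b N); simpl; [tauto|].
    intros [<-|[]]; simpl. split; [lia|]. split; [lia|]. exists b; split; [reflexivity | lia].
  - intros [<-|[]]; simpl. split; [lia|]. split; [lia|]. exists B; split; [reflexivity | lia].
Qed.

Lemma ForallOrdPairs_app {A : Type} (P : A -> A -> Prop) (l1 l2 : list A) :
  ForallOrdPairs P l1 -> ForallOrdPairs P l2 -> (forall a b, In a l1 -> In b l2 -> P a b) ->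
  ForallOrdPairs P (l1 ++ l2).
Proof.
  intros H1 H2 H. induction H1 as [|a l1 Ha _ IH]; simpl; [exact H2|].
  constructor.
  - apply Forall_app. split; [exact Ha|]. apply Forall_forall. intros b Hb. apply H; simpl; auto.
  - apply IH. intros a' b Ha' Hb. apply H; simpl; auto.
Qed.

Lemma admissible_clip_family (N B : nat) (F : list interval) :
  admissible_family F -> List.Forall (below B) F -> (N <= B)%nat ->
  admissible_family (flat_map (clip N B) F) /\ List.Forall (in_window N (S B)) (flat_map (clip N B) F).
Proof.
  intros [HV HD] HB HN.
  assert (Hin : forall J, In J (flat_map (clip N B) F) -> valid_interval J /\ in_window N (S B) J).
  { intros J HJ. apply in_flat_map in HJ. destruct HJ as [I [HI HJ]].
    rewrite Forall_forall in HV, HB. eapply clip_in_window; eauto. }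
  split; [split|]; [| |apply Forall_forall; intros J HJ; apply (Hin J HJ)].
  - apply Forall_forall. intros J HJ. apply (Hin J HJ).
  - clear HV HB Hin. induction HD as [|I F HI _ IH]; simpl; [constructor|].
    apply ForallOrdPairs_app; [|exact IH|].
    + unfold clip. destruct (ihi I); [destruct (_ <? _)%nat|]; repeat constructor.
    + intros J J' HJ HJ' k [Hk Hk']. apply in_flat_map in HJ'. destruct HJ' as [I' [HI' HJ']].
      rewrite Forall_forall in HI. apply (HI I' HI' k).
      split; eapply clip_subset; eauto.
Qed.

Lemma exists_window_family (z : nat -> R) (N : nat) (F : list interval) (delta : R) :
  ex_series z -> admissible_family F -> delta < sq_sum (tail_part N z) F ->
  exists B G, admissible_family G /\ List.Forall (in_window N B) G /\ delta < sq_sum z G.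
Proof.
  intros Hz HF Hlt. destruct (exists_below F) as [B0 HB0].
  pose proof (is_lim_seq_sq_sum_clip_family z N F Hz (proj1 HF)) as Hl.
  apply is_lim_seq_spec in Hl.
  assert (Heps : 0 < sq_sum (tail_part N z) F - delta) by lra.
  destruct (Hl (mkposreal _ Heps)) as [N0 HN0]. simpl in HN0.
  set (B := Nat.max (Nat.max N0 B0) N).
  destruct (admissible_clip_family N B F) as [HG HW]; [exact HF| |lia|].
  { eapply List.Forall_impl; [|exact HB0]. intro; apply below_mono. lia. }
  exists (S B), (flat_map (clip N B) F). split; [exact HG|]. split; [exact HW|].
  specialize (HN0 B ltac:(lia)). apply Rabs_lt_between in HN0. lra.
Qed.

Lemma admissible_app_windows (B B' : nat) (G G' : list interval) :
  admissible_family G -> admissible_family G' ->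
  List.Forall (in_window 0 B) G -> List.Forall (in_window B B') G' -> admissible_family (G ++ G').
Proof.
  intros [HV HD] [HV' HD'] HW HW'. split; [apply Forall_app; auto|].
  apply ForallOrdPairs_app; [exact HD | exact HD'|].
  intros I J HI HJ k [[_ Hk] [Hk' _]]. rewrite Forall_forall in HW, HW'.
  destruct (HW I HI) as [_ [c [Hc HcB]]]. destruct (HW' J HJ) as [HJlo _].
  rewrite Hc in Hk. lia.
Qed.

Lemma exists_nat_mult_gt (d M : R) : 0 < d -> exists k, M < INR k * d.
Proof.
  intro Hd. assert (HM : 0 < Rabs M + 1) by (pose proof (Rabs_pos M); lra).
  destruct (archimed_cor1 (d / (Rabs M + 1))) as [k [Hk Hk0]]; [apply Rdiv_lt_0_compat; lra|].
  exists k. assert (Hk' : 0 < INR k) by (apply lt_0_INR; lia).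
  apply (Rmult_lt_compat_l (INR k * (Rabs M + 1))) in Hk; [|nra].
  field_simplify in Hk; [|lra..]. pose proof (Rle_abs M). lra.
Qed.

(* Otherwise disjoint windows [B_k, B_(k+1)) could each carry J-mass [delta], and
   their union would make the J-quantity of [z] unbounded. *)
Lemma tail_part_small (z : nat -> R) (delta : R) :
  in_J z -> 0 < delta ->
  exists N, (1 <= N)%nat /\ forall F, admissible_family F -> sq_sum (tail_part N z) F <= delta.
Proof.
  intros Hz Hd. apply NNPP. intro Hno.
  assert (Bad : forall N, (1 <= N)%nat ->
            exists F, admissible_family F /\ delta < sq_sum (tail_part N z) F).
  { intros N HN. apply NNPP. intro H. apply Hno. exists N. split; [exact HN|].
    intros F HF. apply Rnot_lt_le. intro. apply H. exists F. auto. }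
  assert (Grow : forall k, exists B G, (1 <= B)%nat /\ admissible_family G /\
                   List.Forall (in_window 0 B) G /\ INR k * delta <= sq_sum z G).
  { induction k as [|k [B [G [HB [HG [HW Hk]]]]]].
    - exists 1%nat, []. repeat split; [constructor..|]. unfold sq_sum; simpl. lra.
    - destruct (Bad B HB) as [F [HF HFd]].
      destruct (exists_window_family z B F delta (ex_series_of_in_J z Hz) HF HFd)
        as [B' [G' [HG' [HW' Hd']]]].
      exists (Nat.max B B'), (G ++ G'). split; [lia|]. split; [|split].
      + apply (admissible_app_windows B B'); auto.
      + apply Forall_app. split; eapply List.Forall_impl; try eassumption;
          intro; apply in_window_mono; lia.
      + rewrite sq_sum_app, S_INR. lra. }
  destruct Hz as [_ [M HM]]. destruct (exists_nat_mult_gt delta M Hd) as [k Hk].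
  destruct (Grow k) as [B [G [_ [HG [_ HkG]]]]]. specialize (HM G HG). lra.
Qed.

Lemma dual_tail_part_small (f : (nat -> R) -> R) (z : nat -> R) (eps : R) :
  in_Jdual f -> in_J z -> 0 < eps -> exists N, (1 <= N)%nat /\ Rabs (f (tail_part N z)) <= eps.
Proof.
  intros [_ [_ [C HC]]] Hz Heps.
  assert (HC1 : 0 < Rabs C + 1) by (pose proof (Rabs_pos C); lra).
  set (r := eps / (Rabs C + 1)).
  assert (Hr : 0 < r) by (apply Rdiv_lt_0_compat; lra).
  destruct (tail_part_small z (r ^ 2) Hz (pow_lt r 2 Hr)) as [N [HN Htail]].
  exists N. split; [exact HN|].
  assert (HJ : Jnorm (tail_part N z) <= r).
  { rewrite <- (sqrt_pow2 r) by lra. apply Jnorm_le_sqrt, Htail. }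
  assert (HJ0 : 0 <= Jnorm (tail_part N z)) by apply sqrt_pos.
  assert (Hr' : Rabs C * r <= eps).
  { unfold r. apply (Rmult_le_reg_r (Rabs C + 1)); [lra|].
    field_simplify; [|lra]. pose proof (Rabs_pos C). nra. }
  eapply Rle_trans; [apply HC, in_J_tail_part, Hz|].
  apply Rle_trans with (Rabs C * r); [|exact Hr'].
  apply Rle_trans with (Rabs C * Jnorm (tail_part N z)).
  - apply Rmult_le_compat_r; [exact HJ0 | apply Rle_abs].
  - apply Rmult_le_compat_l; [apply Rabs_pos | exact HJ].
Qed.

Fixpoint chain (i j : nat) (l : list nat) : Prop :=
  match l with [] => i = j | b :: l' => (i < b)%nat /\ chain b j l' end.

Fixpoint chain_var (s : nat -> R) (i : nat) (l : list nat) : R :=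
  match l with [] => 0 | b :: l' => (s b - s i) ^ 2 + chain_var s b l' end.

Lemma chain_var_nonneg (s : nat -> R) (i : nat) (l : list nat) : 0 <= chain_var s i l.
Proof.
  revert i. induction l as [|b l IH]; intro i; cbn [chain_var]; [lra|].
  pose proof (pow2_ge_0 (s b - s i)). pose proof (IH b). lra.
Qed.

Lemma chain_le (i j : nat) (l : list nat) : chain i j l -> (i <= j)%nat.
Proof.
  revert i. induction l as [|b l IH]; intros i H; simpl in H; [lia|].
  destruct H as [H1 H2]. apply IH in H2. lia.
Qed.

Lemma chain_refl (j : nat) (l : list nat) : chain j j l -> l = [].
Proof. destruct l as [|b l]; [reflexivity|]. intros [H1 H2]. apply chain_le in H2. lia. Qed.

Lemma chain_app (i m j : nat) (l1 l2 : list nat) :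
  chain i m l1 -> chain m j l2 -> chain i j (l1 ++ l2).
Proof.
  revert i. induction l1 as [|b l1 IH]; intros i H1 H2; simpl in *; [subst; exact H2|].
  destruct H1. split; eauto.
Qed.

Lemma chain_var_app (s : nat -> R) (i m : nat) (l1 l2 : list nat) :
  chain i m l1 -> chain_var s i (l1 ++ l2) = chain_var s i l1 + chain_var s m l2.
Proof.
  revert i. induction l1 as [|b l1 IH]; intros i H; simpl in H |- *; [subst; lra|].
  destruct H as [_ H]. rewrite (IH b H). lra.
Qed.

Lemma chain_split (i j k : nat) (l : list nat) :
  chain i j l -> In k l -> exists l1 l2, l = l1 ++ l2 /\ chain i k l1 /\ chain k j l2.
Proof.
  revert i. induction l as [|b l IH]; intros i H Hk; [destruct Hk|]. destruct H as [H1 H2].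
  destruct Hk as [<-|Hk].
  - exists [b], l. simpl. auto.
  - destruct (IH b H2 Hk) as [l1 [l2 [-> [C1 C2]]]]. exists (b :: l1), l2. simpl. auto.
Qed.

Lemma chain_last (i j : nat) (l : list nat) :
  chain i j l -> (i < j)%nat -> exists l' a, l = l' ++ [j] /\ chain i a l' /\ (a < j)%nat.
Proof.
  revert i. induction l as [|b l IH]; intros i H Hij; simpl in H; [lia|]. destruct H as [H1 H2].
  destruct (Nat.eq_dec b j) as [->|Hne].
  - rewrite (chain_refl j l H2). exists [], i. simpl. auto.
  - pose proof (chain_le _ _ _ H2).
    destruct (IH b H2 ltac:(lia)) as [l' [a [-> [C Ha]]]]. exists (b :: l'), a. simpl. auto.
Qed.

Lemma chain_var_ext (s s' : nat -> R) (i : nat) (l : list nat) :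
  (forall m, m = i \/ In m l -> s m = s' m) -> chain_var s i l = chain_var s' i l.
Proof.
  revert i. induction l as [|b l IH]; intros i H; cbn [chain_var]; [reflexivity|].
  rewrite (IH b).
  - rewrite (H b), (H i) by (simpl; auto). reflexivity.
  - intros m [->|Hm]; apply H; simpl; auto.
Qed.

Definition steps (a n : nat) : list nat := seq (S a) n.

Lemma chain_steps (a n : nat) : chain a (a + n) (steps a n).
Proof.
  revert a. induction n as [|n IH]; intro a; unfold steps in *; simpl; [lia|].
  split; [lia|]. replace (a + S n)%nat with (S a + n)%nat by lia. apply IH.
Qed.

Definition sq_incr (s : nat -> R) (m : nat) : R := (s (S m) - s m) ^ 2.

Lemma chain_var_steps (s : nat -> R) (a n : nat) :
  chain_var s a (steps a n) = psum (sq_incr s) (a + n) - psum (sq_incr s) a.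
Proof.
  revert a. induction n as [|n IH]; intro a; [simpl; rewrite Nat.add_0_r; lra|].
  unfold steps. simpl seq. cbn [chain_var]. fold (steps (S a) n). rewrite IH.
  replace (S a + n)%nat with (a + S n)%nat by lia. simpl psum. unfold sq_incr. lra.
Qed.

Lemma fold_Rmax_ge (g : nat -> R) (d : R) (L : list nat) :
  d <= fold_right (fun b acc => Rmax (g b) acc) d L /\
  forall b, In b L -> g b <= fold_right (fun b acc => Rmax (g b) acc) d L.
Proof.
  induction L as [|a L [H1 H2]]; simpl; [split; [lra | tauto]|]. split.
  - eapply Rle_trans; [exact H1 | apply Rmax_r].
  - intros b [<-|Hb]; [apply Rmax_l|]. eapply Rle_trans; [apply H2, Hb | apply Rmax_r].
Qed.

Lemma fold_Rmax_attained (g : nat -> R) (d : R) (L : list nat) :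
  fold_right (fun b acc => Rmax (g b) acc) d L = d \/
  exists b, In b L /\ fold_right (fun b acc => Rmax (g b) acc) d L = g b.
Proof.
  induction L as [|a L IH]; simpl; [auto|].
  destruct (Rle_dec (g a) (fold_right (fun b acc => Rmax (g b) acc) d L)).
  - rewrite Rmax_right by assumption. destruct IH as [H|[b [Hb E]]]; [left | right; exists b]; auto.
  - rewrite Rmax_left by lra. right. exists a. auto.
Qed.

(* The maximum of [chain_var s i] over chains from [i] to [j], by recursion on the first
   step ([fuel] bounds the chain length); as a finite maximum of polynomials in the values
   of [s] it is continuous in each of them. *)
Fixpoint max_var_fuel (s : nat -> R) (fuel i j : nat) : R :=
  match fuel with
  | O => 0
  | S fuel' =>
      if (i <? j)%nat then
        fold_right (fun b acc => Rmax ((s b - s i) ^ 2 + max_var_fuel s fuel' b j) acc)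
          ((s j - s i) ^ 2 + max_var_fuel s fuel' j j) (seq (S i) (j - S i))
      else 0
  end.

Definition max_var (s : nat -> R) (i j : nat) : R := max_var_fuel s (j - i) i j.

Lemma chain_var_le_max_var_fuel (s : nat -> R) (fuel i j : nat) (l : list nat) :
  (j - i <= fuel)%nat -> chain i j l -> chain_var s i l <= max_var_fuel s fuel i j.
Proof.
  revert i j l. induction fuel as [|fuel IH]; intros i j l Hf H.
  - pose proof (chain_le _ _ _ H). replace j with i in H by lia.
    rewrite (chain_refl i l H). simpl. lra.
  - simpl. destruct (Nat.ltb_spec i j).
    + destruct l as [|b l]; simpl in H; [lia|]. destruct H as [Hb Hl].
      pose proof (chain_le _ _ _ Hl). cbn [chain_var].
      destruct (fold_Rmax_ge (fun b => (s b - s i) ^ 2 + max_var_fuel s fuel b j)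
                  ((s j - s i) ^ 2 + max_var_fuel s fuel j j) (seq (S i) (j - S i))) as [G1 G2].
      eapply Rle_trans; [apply Rplus_le_compat_l, (IH b j l); [lia | exact Hl]|].
      destruct (Nat.eq_dec b j) as [->|Hne]; [exact G1|]. apply G2, in_seq. lia.
    + pose proof (chain_le _ _ _ H). replace j with i in H by lia.
      rewrite (chain_refl i l H). simpl. lra.
Qed.

Lemma max_var_fuel_attained (s : nat -> R) (fuel i j : nat) :
  (i <= j)%nat -> (j - i <= fuel)%nat -> exists l, chain i j l /\ chain_var s i l = max_var_fuel s fuel i j.
Proof.
  revert i j. induction fuel as [|fuel IH]; intros i j Hij Hf; [exists []; simpl; split; [lia | reflexivity]|].
  cbn [max_var_fuel]. destruct (Nat.ltb_spec i j); [|exists []; simpl; split; [lia | reflexivity]].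
  destruct (fold_Rmax_attained (fun b => (s b - s i) ^ 2 + max_var_fuel s fuel b j)
              ((s j - s i) ^ 2 + max_var_fuel s fuel j j) (seq (S i) (j - S i))) as [E|[b [Hb E]]];
    rewrite E.
  - destruct (IH j j) as [l [C Vl]]; try lia. exists (j :: l). simpl. rewrite Vl. auto.
  - apply in_seq in Hb. destruct (IH b j) as [l [C Vl]]; try lia.
    exists (b :: l). simpl. rewrite Vl. split; [split; [lia | exact C] | reflexivity].
Qed.

Lemma chain_var_le_max_var (s : nat -> R) (i j : nat) (l : list nat) :
  chain i j l -> chain_var s i l <= max_var s i j.
Proof. intro H. apply chain_var_le_max_var_fuel; [lia | exact H]. Qed.

Lemma max_var_attained (s : nat -> R) (i j : nat) :
  (i <= j)%nat -> exists l, chain i j l /\ chain_var s i l = max_var s i j.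
Proof. intro H. apply max_var_fuel_attained; lia. Qed.

Lemma chain_var_le_max_var_app (s : nat -> R) (i m j : nat) (l1 l2 : list nat) :
  chain i m l1 -> chain m j l2 -> chain_var s i l1 + chain_var s m l2 <= max_var s i j.
Proof.
  intros H1 H2. rewrite <- (chain_var_app s i m l1 l2 H1).
  apply chain_var_le_max_var, (chain_app i m j); assumption.
Qed.

Definition upd (s : nat -> R) (k : nat) (t : R) : nat -> R :=
  fun m => if (m =? k)%nat then s m + t else s m.

Lemma upd_0 (s : nat -> R) (k : nat) : upd s k 0 = s.
Proof. apply functional_extensionality; intro m. unfold upd. destruct (m =? k)%nat; ring. Qed.

Lemma upd_other (s : nat -> R) (k : nat) (t : R) (m : nat) : m <> k -> upd s k t m = s m.
Proof. intro H. unfold upd. destruct (Nat.eqb_spec m k); [contradiction | reflexivity]. Qed.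

Lemma upd_same (s : nat -> R) (k : nat) (t : R) : upd s k t k = s k + t.
Proof. unfold upd. rewrite Nat.eqb_refl. reflexivity. Qed.

Lemma chain_var_upd_notin (s : nat -> R) (k : nat) (t : R) (i : nat) (l : list nat) :
  i <> k -> ~ In k l -> chain_var (upd s k t) i l = chain_var s i l.
Proof.
  intros Hi Hl. apply chain_var_ext. intros m [->|Hm]; apply upd_other; [exact Hi|].
  intros ->. contradiction.
Qed.

Lemma continuity_Rmax (f g : R -> R) :
  continuity f -> continuity g -> continuity (fun t => Rmax (f t) (g t)).
Proof.
  intros Hf Hg.
  replace (fun t => Rmax (f t) (g t)) with (fun t => (f t + g t + Rabs (f t - g t)) * / 2).
  - apply continuity_mult; [|apply continuity_const; intros ? ?; reflexivity].
    apply continuity_plus; [apply continuity_plus; assumption|].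
    apply (continuity_comp (fun t => f t - g t) Rabs); [apply continuity_minus; assumption|].
    apply Rcontinuity_abs.
  - apply functional_extensionality; intro t. unfold Rmax.
    destruct (Rle_dec (f t) (g t)); [rewrite Rabs_left1 | rewrite Rabs_right]; lra.
Qed.

Lemma continuity_max_var_upd (s : nat -> R) (k i j : nat) :
  continuity (fun t => max_var (upd s k t) i j).
Proof.
  assert (Hupd : forall m, continuity (fun t => upd s k t m)).
  { intro m. unfold upd. destruct (m =? k)%nat; reg. }
  unfold max_var. generalize (j - i)%nat as fuel. intro fuel. revert i j.
  induction fuel as [|fuel IH]; intros i j; cbn [max_var_fuel]; [reg|].
  destruct (i <? j)%nat; [|reg].
  induction (seq (S i) (j - S i)) as [|b L IHL]; simpl fold_right.
  - apply continuity_plus; [|apply IH]. apply continuity_mult; [|apply continuity_mult; [|reg]];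
      apply continuity_minus; apply Hupd.
  - apply continuity_Rmax; [|exact IHL]. apply continuity_plus; [|apply IH].
    apply continuity_mult; [|apply continuity_mult; [|reg]]; apply continuity_minus; apply Hupd.
Qed.

(* The right-hand sides exceed the left one by [2(q-p)(t-r)], [-2(q-p)(r-q)] and
   [-2(r-q)(t-r)] respectively, and these three numbers cannot all be negative. *)
Lemma four_point_ineq (p q r t : R) :
  (r - p) ^ 2 + (t - q) ^ 2 <= (t - p) ^ 2 + (r - q) ^ 2 \/
  (r - p) ^ 2 + (t - q) ^ 2 <= (q - p) ^ 2 + (t - q) ^ 2 + (r - q) ^ 2 \/
  (r - p) ^ 2 + (t - q) ^ 2 <= (r - p) ^ 2 + (t - r) ^ 2 + (r - q) ^ 2.
Proof.
  set (a := q - p). set (b := r - q). set (c := t - r).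
  assert (Hsign : 0 <= a * c \/ a * b <= 0 \/ b * c <= 0).
  { destruct (Rle_or_lt 0 (a * c)); [now left|]. destruct (Rle_or_lt (a * b) 0); [now right; left|].
    right; right. assert (0 <= b * b) by nra. nra. }
  replace (r - p) with (a + b) by (unfold a, b; ring). replace (t - q) with (b + c) by (unfold b, c; ring).
  replace (t - p) with (a + b + c) by (unfold a, b, c; ring).
  destruct Hsign as [H|[H|H]]; [left | right; left | right; right]; nra.
Qed.

Lemma max_var_exchange (s : nat -> R) (i k j : nat) :
  (i <= k)%nat -> (S k <= j)%nat ->
  max_var s i (S k) + max_var s k j <= max_var s i j + sq_incr s k.
Proof.
  intros Hik Hkj. unfold sq_incr.
  destruct (max_var_attained s i (S k)) as [A [CA <-]]; [lia|].
  destruct (max_var_attained s k j) as [B [CB <-]]; [lia|].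
  destruct (chain_last i (S k) A CA ltac:(lia)) as [A' [a [-> [CA' Ha]]]].
  rewrite (chain_var_app s i a A' [S k] CA'). cbn [chain_var].
  destruct B as [|b B']; [simpl in CB; lia|]. destruct CB as [Hb CB']. cbn [chain_var].
  destruct (Nat.eq_dec a k) as [->|Hak].
  - pose proof (chain_var_le_max_var_app s i k j A' (b :: B') CA' (conj Hb CB')).
    cbn [chain_var] in H. lra.
  - destruct (Nat.eq_dec b (S k)) as [->|Hbk].
    + pose proof (chain_var_le_max_var_app s i (S k) j (A' ++ [S k]) B') as H.
      rewrite (chain_var_app s i a A' [S k] CA') in H. cbn [chain_var] in H.
      assert (chain i (S k) (A' ++ [S k])) by (apply (chain_app i a); simpl; auto).
      specialize (H ltac:(assumption) CB'). lra.
    + assert (Hvia : forall mid, chain a b mid ->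
                chain_var s i A' + chain_var s a mid + chain_var s b B' <= max_var s i j).
      { intros mid Cmid. rewrite <- (chain_var_app s i a A' mid CA').
        apply (chain_var_le_max_var_app s i b j); [apply (chain_app i a)|]; assumption. }
      pose proof (Hvia [b] ltac:(simpl; split; lia)) as H1.
      pose proof (Hvia [k; b] ltac:(simpl; repeat split; lia)) as H2.
      pose proof (Hvia [S k; b] ltac:(simpl; repeat split; lia)) as H3.
      cbn [chain_var] in H1, H2, H3.
      destruct (four_point_ineq (s a) (s k) (s (S k)) (s b)) as [G|[G|G]]; lra.
Qed.

Definition var_le_1 (s : nat -> R) (N : nat) : Prop :=
  forall l, chain 0 N l -> chain_var s 0 l <= 1.

Definition tight (s : nat -> R) (N k : nat) : Prop :=
  exists l, chain 0 N l /\ In k l /\ chain_var s 0 l = 1.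

(* By the exchange inequality, tightness at [k + 1] lets the optimal chains from [k]
   to [N] be pushed down to unit steps, one index at a time. *)
Lemma psum_sq_incr_eq_1 (s : nat -> R) (N : nat) :
  (1 <= N)%nat -> var_le_1 s N -> (forall k, (1 <= k <= N)%nat -> tight s N k) ->
  psum (sq_incr s) N = 1.
Proof.
  intros HN Hvar Htight.
  assert (Hsplit : forall k, (1 <= k <= N)%nat -> max_var s 0 N <= max_var s 0 k + max_var s k N).
  { intros k Hk. destruct (Htight k Hk) as [l [C [Hin Vl]]].
    destruct (chain_split 0 N k l C Hin) as [l1 [l2 [-> [C1 C2]]]].
    rewrite (chain_var_app s 0 k l1 l2 C1) in Vl.
    destruct (max_var_attained s 0 N) as [l0 [C0 <-]]; [lia|].
    pose proof (Hvar l0 C0). pose proof (chain_var_le_max_var s 0 k l1 C1).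
    pose proof (chain_var_le_max_var s k N l2 C2). lra. }
  assert (Hsteps : forall d k, (k + d = N)%nat ->
                     max_var s k N <= psum (sq_incr s) N - psum (sq_incr s) k).
  { induction d as [|d IH]; intros k Hk.
    - replace k with N by lia. destruct (max_var_attained s N N) as [l [C <-]]; [lia|].
      rewrite (chain_refl N l C). simpl. lra.
    - pose proof (max_var_exchange s 0 k N ltac:(lia) ltac:(lia)).
      pose proof (Hsplit (S k) ltac:(lia)). specialize (IH (S k) ltac:(lia)).
      cbn [psum] in IH. lra. }
  specialize (Hsteps N 0%nat ltac:(lia)).
  destruct (Htight N) as [l [C [_ Vl]]]; [lia|]. pose proof (chain_var_le_max_var s 0 N l C).
  pose proof (Hvar _ (chain_steps 0 N)). rewrite chain_var_steps in H0. simpl in *. lra.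
Qed.

Definition through_var (s : nat -> R) (N k : nat) : R := max_var s 0 k + max_var s k N.

Lemma chain_var_le_through_var (s : nat -> R) (N k : nat) (l : list nat) :
  chain 0 N l -> In k l -> chain_var s 0 l <= through_var s N k.
Proof.
  intros C Hin. destruct (chain_split 0 N k l C Hin) as [l1 [l2 [-> [C1 C2]]]].
  rewrite (chain_var_app s 0 k l1 l2 C1). unfold through_var.
  apply Rplus_le_compat; apply chain_var_le_max_var; assumption.
Qed.

Lemma through_var_attained (s : nat -> R) (N k : nat) :
  (1 <= k <= N)%nat -> exists l, chain 0 N l /\ In k l /\ chain_var s 0 l = through_var s N k.
Proof.
  intro Hk. destruct (max_var_attained s 0 k) as [l1 [C1 V1]]; [lia|].
  destruct (max_var_attained s k N) as [l2 [C2 V2]]; [lia|].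
  exists (l1 ++ l2). split; [apply (chain_app 0 k); assumption|]. split.
  - destruct (chain_last 0 k l1 C1 ltac:(lia)) as [l' [a [-> _]]].
    apply in_or_app. left. apply in_or_app. right. simpl. auto.
  - rewrite (chain_var_app s 0 k l1 l2 C1), V1, V2. reflexivity.
Qed.

Lemma through_var_lt_1 (s : nat -> R) (N k : nat) :
  var_le_1 s N -> (1 <= k <= N)%nat -> ~ tight s N k -> through_var s N k < 1.
Proof.
  intros Hvar Hk Hnot. apply Rnot_le_lt. intro H1. apply Hnot.
  destruct (through_var_attained s N k Hk) as [l [C [Hin Vl]]].
  exists l. split; [exact C|]. split; [exact Hin|]. pose proof (Hvar l C). lra.
Qed.

Lemma through_var_upd_ge (s : nat -> R) (N k : nat) (t : R) :
  (1 <= k <= N)%nat -> (s k + t - s 0%nat) ^ 2 <= through_var (upd s k t) N k.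
Proof.
  intro Hk. destruct (max_var_attained (upd s k t) k N) as [l [C _]]; [lia|].
  eapply Rle_trans; [|apply (chain_var_le_through_var _ N k (k :: l)); simpl; auto; split; [lia | exact C]].
  cbn [chain_var]. rewrite upd_same, upd_other by lia.
  pose proof (chain_var_nonneg (upd s k t) k l). lra.
Qed.

(* Moving [s k] far enough in either direction makes the best chain through [k] have
   variation at least 1, so by continuity some shift makes it exactly 1. *)
Lemma exists_shift_through_var_eq_1 (s : nat -> R) (N k : nat) (d : R) :
  (1 <= k <= N)%nat -> through_var s N k < 1 ->
  exists t, 0 <= t * d /\ through_var (upd s k t) N k = 1.
Proof.
  intros Hk Hlt.
  set (sg := if Rle_dec 0 d then 1 else -1).
  assert (Hsg : 0 <= sg * d /\ sg * sg = 1) by (unfold sg; destruct (Rle_dec 0 d); split; nra).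
  set (T := Rabs (s k - s 0%nat) + 1).
  assert (HT0 : 0 <= T) by (unfold T; pose proof (Rabs_pos (s k - s 0%nat)); lra).
  assert (HT : 1 <= through_var (upd s k (sg * T)) N k).
  { eapply Rle_trans; [|apply through_var_upd_ge, Hk].
    set (e := s k - s 0%nat) in T.
    replace (s k + sg * T - s 0%nat) with (e + sg * T) by (unfold e; ring).
    assert (He : - Rabs e <= sg * e).
    { unfold sg. destruct (Rle_dec 0 d); [pose proof (Rle_abs (- e)); rewrite Rabs_Ropp in H |
        pose proof (Rle_abs e)]; lra. }
    assert (H1 : 0 <= (sg * e + Rabs e) * T) by (apply Rmult_le_pos; lra).
    assert (H2 : Rabs e * Rabs e = e * e) by (rewrite <- Rabs_mult; apply Rabs_pos_eq; nra).
    destruct Hsg as [_ Hsg2]. unfold T in *. nra. }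
  destruct (IVT_cor (fun u => through_var (upd s k (sg * u)) N k - 1) 0 T) as [u [Hu Hroot]].
  - apply continuity_minus; [|reg].
    unfold through_var.
    apply continuity_plus; apply (continuity_comp (fun u => sg * u) (fun t => max_var (upd s k t) _ _));
      [reg | apply continuity_max_var_upd | reg | apply continuity_max_var_upd].
  - exact HT0.
  - rewrite Rmult_0_r, upd_0. nra.
  - exists (sg * u). split; [nra | lra].
Qed.

Section Tightening.

Variable h : (nat -> R) -> R.
Variable D : nat -> R.
Hypothesis h_upd : forall s k t, h (upd s k t) = h s + t * D k.
Variable N : nat.
Hypothesis N_pos : (1 <= N)%nat.

Lemma tighten (s : nat -> R) (k : nat) :
  var_le_1 s N -> (1 <= k <= N)%nat -> ~ tight s N k ->
  exists s', var_le_1 s' N /\ tight s' N k /\ (forall k', tight s N k' -> tight s' N k') /\ h s <= h s'.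
Proof.
  intros Hvar Hk Hnot.
  destruct (exists_shift_through_var_eq_1 s N k (D k) Hk (through_var_lt_1 s N k Hvar Hk Hnot))
    as [t [Ht Hthrough]].
  assert (Hsame : forall l, ~ In k l -> chain_var (upd s k t) 0 l = chain_var s 0 l)
    by (intros l Hl; apply chain_var_upd_notin; [lia | exact Hl]).
  exists (upd s k t). split; [|split; [|split]].
  - intros l C. destruct (in_dec Nat.eq_dec k l) as [Hin|Hin].
    + rewrite <- Hthrough. apply chain_var_le_through_var; assumption.
    + rewrite Hsame by exact Hin. apply Hvar, C.
  - destruct (through_var_attained (upd s k t) N k Hk) as [l [C [Hin Vl]]].
    exists l. split; [exact C|]. split; [exact Hin | lra].
  - intros k' [l [C [Hin Vl]]]. exists l. split; [exact C|]. split; [exact Hin|].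
    rewrite Hsame; [exact Vl|]. intro Hk'. apply Hnot. exists l. auto.
  - rewrite h_upd. lra.
Qed.

Lemma tighten_all (U : list nat) (s : nat -> R) :
  var_le_1 s N -> (forall k, (1 <= k <= N)%nat -> ~ In k U -> tight s N k) ->
  exists s', var_le_1 s' N /\ (forall k, (1 <= k <= N)%nat -> tight s' N k) /\ h s <= h s'.
Proof.
  revert s. induction U as [|k U IH]; intros s Hvar HU.
  - exists s. split; [exact Hvar|]. split; [intros k Hk; apply HU; auto | lra].
  - assert (HU' : forall s', (forall k', tight s N k' -> tight s' N k') ->
                    ((1 <= k <= N)%nat -> tight s' N k) ->
                    forall k', (1 <= k' <= N)%nat -> ~ In k' U -> tight s' N k').
    { intros s' Hpres Hk k' Hk' Hn. destruct (Nat.eq_dec k' k) as [->|Hne]; [exact (Hk Hk')|].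
      apply Hpres, HU; [exact Hk'|]. intros [E|E]; [congruence | contradiction]. }
    destruct (classic ((1 <= k <= N)%nat /\ ~ tight s N k)) as [[Hk Hnot]|Hskip].
    + destruct (tighten s k Hvar Hk Hnot) as [s1 [Hvar1 [Hk1 [Hpres Hh1]]]].
      destruct (IH s1 Hvar1 (HU' s1 Hpres (fun _ => Hk1))) as [s' [Hvar' [Htight' Hh']]].
      exists s'. split; [exact Hvar'|]. split; [exact Htight' | lra].
    + apply IH; [exact Hvar|]. apply (HU' s); [auto|].
      intro Hk. apply NNPP. intro Hnot. apply Hskip. auto.
Qed.

Lemma exists_unit_increments (s : nat -> R) :
  var_le_1 s N -> exists s', var_le_1 s' N /\ psum (sq_incr s') N = 1 /\ h s <= h s'.
Proof.
  intro Hvar. destruct (tighten_all (seq 1 N) s Hvar) as [s' [Hvar' [Htight Hh]]].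
  - intros k Hk Hn. exfalso. apply Hn, in_seq. lia.
  - exists s'. split; [exact Hvar'|]. split; [apply psum_sq_incr_eq_1; assumption | exact Hh].
Qed.

End Tightening.

Fixpoint chain_family (i : nat) (l : list nat) : list interval :=
  match l with [] => [] | b :: l' => Ival i (Some (b - 1)%nat) :: chain_family b l' end.

Lemma chain_family_lo (i j : nat) (l : list nat) (I : interval) :
  chain i j l -> In I (chain_family i l) -> (i <= ilo I)%nat.
Proof.
  revert i. induction l as [|b l IH]; intros i C H; [destruct H|]. destruct C as [Hb C].
  destruct H as [<-|H]; simpl; [lia|]. apply IH in H; [lia | exact C].
Qed.

Lemma admissible_chain_family (i j : nat) (l : list nat) :
  chain i j l -> admissible_family (chain_family i l).
Proof.
  revert i. induction l as [|b l IH]; intros i C; [exact admissible_nil|].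
  destruct C as [Hb C]. destruct (IH b C) as [HV HD]. split; constructor; auto.
  - unfold valid_interval; simpl. lia.
  - apply Forall_forall. intros I HI k [[_ Hk1] [Hk2 _]]. simpl in Hk1.
    pose proof (chain_family_lo b j l I C HI). lia.
Qed.

Lemma sq_sum_chain_family (x : nat -> R) (i j : nat) (l : list nat) :
  chain i j l -> sq_sum x (chain_family i l) = chain_var (psum x) i l.
Proof.
  revert i. induction l as [|b l IH]; intros i C; [reflexivity|]. destruct C as [Hb C].
  cbn [chain_family chain_var]. rewrite sq_sum_cons, (IH b C), isum_finite, pow2_abs by lia.
  replace (S (b - 1)) with b by lia. reflexivity.
Qed.

Lemma var_le_1_psum (x : nat -> R) (N : nat) :
  (forall F, admissible_family F -> sq_sum x F <= 1) -> var_le_1 (psum x) N.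
Proof.
  intros Hx l C. rewrite <- (sq_sum_chain_family x 0 N l C). apply Hx, (admissible_chain_family 0 N l C).
Qed.

Definition incr (s : nat -> R) (n : nat) : R := s (S n) - s n.

Lemma psum_incr (s : nat -> R) (m : nat) : psum (incr s) m = s m - s 0%nat.
Proof. induction m as [|m IH]; simpl; [lra|]. rewrite IH. unfold incr. lra. Qed.

Lemma psum_head_part (N : nat) (x : nat -> R) (m : nat) :
  (m <= N)%nat -> psum (head_part N x) m = psum x m.
Proof.
  intro H. apply psum_ext. intros n Hn. unfold head_part.
  destruct (Nat.ltb_spec n N); [reflexivity | lia].
Qed.

Lemma head_part_support (N : nat) (x : nat -> R) (n : nat) : (N <= n)%nat -> head_part N x n = 0.
Proof. intro H. unfold head_part. destruct (Nat.ltb_spec n N); [lia | reflexivity]. Qed.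

Section TightVector.

Variables (s : nat -> R) (N : nat).
Hypothesis s_var : var_le_1 s N.
Hypothesis s_full : psum (sq_incr s) N = 1.

(* Replacing the unit steps between [A] and [E] of the full chain by one jump cannot
   raise its variation above 1. *)
Lemma sq_jump_le (A E : nat) :
  (A <= E <= N)%nat -> (s E - s A) ^ 2 <= psum (sq_incr s) E - psum (sq_incr s) A.
Proof.
  intro HAE. destruct (Nat.eq_dec A E) as [->|Hne]; [rewrite Rminus_diag, pow_i by lia; lra|].
  assert (C : chain 0 N (steps 0 A ++ E :: steps E (N - E))).
  { apply (chain_app 0 A); [apply (chain_steps 0 A)|]. split; [lia|].
    replace N with (E + (N - E))%nat at 1 by lia. apply chain_steps. }
  pose proof (s_var _ C) as H.
  rewrite (chain_var_app s 0 A _ _ (chain_steps 0 A)) in H. cbn [chain_var] in H.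
  rewrite !chain_var_steps in H. replace (E + (N - E))%nat with N in H by lia. simpl in H. lra.
Qed.

Lemma psum_sq_head_part (m : nat) :
  (m <= N)%nat -> psum (fun n => Rabs (head_part N (incr s) n) ^ 2) m = psum (sq_incr s) m.
Proof.
  intro H. apply psum_ext. intros n Hn. unfold head_part, incr, sq_incr.
  destruct (Nat.ltb_spec n N); [apply pow2_abs | lia].
Qed.

Lemma NPR_hereditary_head_part_incr : NPR_hereditary (head_part N (incr s)).
Proof.
  intros I _. unfold NPR. set (y := head_part N (incr s)).
  assert (Hsupp : forall n, (N <= n)%nat -> y n = 0) by (intros; apply head_part_support; auto).
  rewrite (Series_ext (fun n => Rabs (restrict y I n) ^ 2) (restrict (fun n => Rabs (y n) ^ 2) I)).
  2: { intro n. unfold restrict. destruct (in_intervalb I n); [reflexivity|]. rewrite Rabs_R0. ring. }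
  rewrite (Series_restrict_finite_support y N I Hsupp).
  rewrite (Series_restrict_finite_support _ N I) by (intros n Hn; rewrite Hsupp, Rabs_R0 by exact Hn; ring).
  assert (HAE : (Nat.min (ilo I) N <= Nat.min (icut I N) N <= N)%nat) by (unfold icut; lia).
  unfold y. rewrite !psum_sq_head_part, !psum_head_part, !psum_incr, pow2_abs by lia.
  replace (s (Nat.min (icut I N) N) - s 0%nat - (s (Nat.min (ilo I) N) - s 0%nat))
    with (s (Nat.min (icut I N) N) - s (Nat.min (ilo I) N)) by ring.
  apply sq_jump_le, HAE.
Qed.

Lemma l2norm_head_part_incr : l2norm (head_part N (incr s)) = 1.
Proof.
  unfold l2norm. rewrite (Series_finite_support _ N), psum_sq_head_part, s_full by
    (lia || (intros n Hn; rewrite head_part_support, Rabs_R0 by exact Hn; ring)).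
  apply sqrt_1.
Qed.

End TightVector.

Definition incr_pairing (c : nat -> R) (N : nat) (s : nat -> R) : R :=
  psum (fun i => c i * incr s i) N.

Lemma incr_pairing_upd (c : nat -> R) (N : nat) (s : nat -> R) (k : nat) (t : R) :
  incr_pairing c N (upd s k t) = incr_pairing c N s + t * incr_pairing c N (unit_vec k).
Proof.
  unfold incr_pairing. rewrite <- psum_scal, <- psum_plus. apply psum_ext. intros n _.
  unfold incr, upd, unit_vec. destruct (S n =? k)%nat, (n =? k)%nat; ring.
Qed.

Definition npr_values (f : (nat -> R) -> R) (r : R) : Prop :=
  exists x, in_J x /\ NPR_hereditary x /\ l2norm x = 1 /\ r = f x.

Lemma head_part_le_npr_values (f : (nat -> R) -> R) (z : nat -> R) (N : nat) :
  in_Jdual f -> (forall F, admissible_family F -> sq_sum z F <= 1) -> (1 <= N)%nat ->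
  exists y, npr_values f (f y) /\ f (head_part N z) <= f y.
Proof.
  intros hf Hz HN. set (c := fun i => f (unit_vec i)).
  destruct (exists_unit_increments (incr_pairing c N) (fun k => incr_pairing c N (unit_vec k))
              (incr_pairing_upd c N) N HN (psum z) (var_le_1_psum z N Hz)) as [s [Hvar [Hfull Hh]]].
  exists (head_part N (incr s)). split.
  - exists (head_part N (incr s)). split; [apply in_J_head_part|].
    split; [apply NPR_hereditary_head_part_incr; assumption|].
    split; [apply l2norm_head_part_incr; assumption | reflexivity].
  - rewrite !dual_head_part by exact hf.
    replace (psum (fun i => f (unit_vec i) * z i) N) with (incr_pairing c N (psum z))
      by (apply psum_ext; intros n _; unfold c, incr; simpl; ring).
    exact Hh.
Qed.

Lemma Rbar_le_Lub_Rbar_approx (E : R -> Prop) (a : R) :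
  (forall eps, 0 < eps -> exists r, E r /\ a <= r + eps) -> Rbar_le a (Lub_Rbar E).
Proof.
  intro H. destruct (Lub_Rbar_correct E) as [Hub _].
  destruct (Lub_Rbar E) as [l| |] eqn:El; simpl; auto.
  - apply Rnot_lt_le. intro Hlt.
    destruct (H ((a - l) / 2) ltac:(lra)) as [r [Er Har]]. specialize (Hub r Er). simpl in Hub. lra.
  - destruct (H 1 ltac:(lra)) as [r [Er _]]. exact (Hub r Er).
Qed.

Lemma dual_le_Lub_npr_values (f : (nat -> R) -> R) (z : nat -> R) :
  in_Jdual f -> in_J z -> (forall F, admissible_family F -> sq_sum z F <= 1) ->
  Rbar_le (f z) (Lub_Rbar (npr_values f)).
Proof.
  intros hf Hz Hball. apply Rbar_le_Lub_Rbar_approx. intros eps Heps.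
  destruct (dual_tail_part_small f z eps hf Hz Heps) as [N [HN Htail]].
  destruct (head_part_le_npr_values f z N hf Hball HN) as [y [Hy Hfy]].
  exists (f y). split; [exact Hy|].
  destruct hf as [Hadd _].
  rewrite (head_part_add_tail_part N z), Hadd by (apply in_J_head_part || apply in_J_tail_part, Hz).
  pose proof (Rle_abs (f (tail_part N z))). lra.
Qed.

Lemma Rabs_dual_le_Lub_npr_values (f : (nat -> R) -> R) (x : nat -> R) :
  in_Jdual f -> in_J x -> Jnorm x <= 1 -> Rbar_le (Rabs (f x)) (Lub_Rbar (npr_values f)).
Proof.
  intros hf Hx Hnorm.
  assert (Hball : forall F, admissible_family F -> sq_sum x F <= 1).
  { intros F HF. pose proof (sq_sum_le_Jnorm_sq x F Hx HF).
    assert (0 <= Jnorm x) by apply sqrt_pos. nra. }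
  destruct (Rle_or_lt 0 (f x)) as [Hpos|Hneg].
  - rewrite Rabs_pos_eq by exact Hpos. exact (dual_le_Lub_npr_values f x hf Hx Hball).
  - rewrite Rabs_left by exact Hneg. pose proof hf as [_ [Hscal _]].
    replace (- f x) with (f (fun n => -1 * x n)) by (rewrite Hscal by exact Hx; ring).
    apply dual_le_Lub_npr_values; [exact hf | apply in_J_scal, Hx|].
    intros F HF. rewrite sq_sum_scal. specialize (Hball F HF). lra.
Qed.

Lemma Jnorm_le_1_of_NPR_hereditary (y : nat -> R) :
  in_J y -> NPR_hereditary y -> l2norm y = 1 -> Jnorm y <= 1.
Proof.
  intros Hy HN Hl. destruct (l2norm_eq_1 y Hl) as [Hy2 _]. rewrite <- Hl.
  apply Jnorm_le_l2norm_of_NPR_hereditary; [apply ex_series_of_in_J | |]; assumption.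
Qed.

Theorem corollary3p20 (f : (nat -> R) -> R) (hf : in_Jdual f) :
  Jdualnorm f =
  Lub_Rbar (fun r => exists x, in_J x /\ NPR_hereditary x /\ l2norm x = 1 /\ r = f x).
Proof.
  apply is_lub_Rbar_unique. split.
  - intros r [x [Hx [Hnorm ->]]]. apply Rabs_dual_le_Lub_npr_values; assumption.
  - intros b Hb. apply (proj2 (Lub_Rbar_correct (npr_values f))).
    intros r [y [Hy [HN [Hl ->]]]]. apply Rbar_le_trans with (Rabs (f y)); [apply Rle_abs|].
    apply Hb. exists y. split; [exact Hy|]. split; [apply Jnorm_le_1_of_NPR_hereditary; assumption | reflexivity].
Qed.
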